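(* For all positive integers $d$ and $k$ there exists a triangulation $T$ of the sphere $S^d$ such that $\Delta_{0,1}(T) \leq (d+1)(d^2+d+2)$, $|V(T)| = (d^2+d+1)k + (d+2)^2$, and $T$ has $k$ $d$-dimensional faces which are pairwise vertex-disjoint and nonadjacent. Consequently, for every $d$ there exists $L$ such that for every $k$ there is a triangulation $T$ of $S^d$ with $\Delta(T) \leq L$ and $|V(T)| \leq Lk$ which has $k$ $d$-dimensional faces $t_1,\dots,t_k$ that are pairwise vertex-disjoint and nonadjacent.
   Context: For a finite simplicial complex $X$, $\mathrm{skel}_k(X)$ is the set of $k$-dimensional faces, $\Delta_{i,j}(X) = \max_{\sigma \in \mathrm{skel}_i(X)} |\{\tau \in \mathrm{skel}_j(X) : \sigma \subseteq \tau\}|$, and $\Delta(X) = \max_{i,j}\Delta_{i,j}(X)$. Two faces are nonadjacent if there is no edge between a vertex of one and a vertex of the other. *)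

From HB Require Import structures.
From mathcomp Require Import all_boot all_order all_algebra.
From mathcomp Require Import all_classical all_reals all_analysis.
From mathcomp Require Import Rstruct Rstruct_topology.
Set Implicit Arguments. Unset Strict Implicit. Unset Printing Implicit Defensive.
Import Order.TTheory GRing.Theory Num.Theory.

Definition simplicial_complex (V : finType) (X : {set {set V}}) : Prop :=
  (@finset.set0 V) \notin X /\
  forall s t : {set V}, s \in X -> t \subset s -> t != @finset.set0 V -> t \in X.

Definition vertices (V : finType) (X : {set {set V}}) : {set V} :=
  [set v | [set v] \in X].

Definition skel (V : finType) (X : {set {set V}}) (k : nat) : {set {set V}} :=
  [set s in X | #|s| == k.+1].

Definition Delta_ij (V : finType) (X : {set {set V}}) (i j : nat) : nat :=
  \max_(s in skel X i) #|[set t in skel X j | s \subset t]|.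

(* Delta(X) = max_{i,j} Delta_{i,j}(X); indices beyond #|V| give 0. *)
Definition Delta (V : finType) (X : {set {set V}}) : nat :=
  \max_(i < #|V|.+1) \max_(j < #|V|.+1) Delta_ij X i j.

Definition nonadjacent (V : finType) (X : {set {set V}}) (s t : {set V}) : Prop :=
  forall x y, x \in s -> y \in t -> [set x; y] \notin skel X 1.

Local Open Scope ring_scope.
Local Open Scope classical_set_scope.

(* geometric realization of X, inside R^V (coordinates indexed via enum_rank) *)
Definition geom_realization (V : finType) (X : {set {set V}}) : set 'rV[Rdefinitions.R]_#|V| :=
  [set x | (forall i, 0 <= x ord0 i) /\ \sum_i x ord0 i = 1 /\
           exists2 s, s \in X & forall i, x ord0 i != 0 -> enum_val i \in s].

Definition sphere (d : nat) : set 'rV[Rdefinitions.R]_d.+1 :=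
  [set y | \sum_i (y ord0 i) ^+ 2 = 1].
Arguments sphere d : clear implicits.

Definition homeomorphic (m n : nat) (A : set 'rV[Rdefinitions.R]_m) (B : set 'rV[Rdefinitions.R]_n) : Prop :=
  exists (f : 'rV[Rdefinitions.R]_m -> 'rV[Rdefinitions.R]_n) (g : 'rV[Rdefinitions.R]_n -> 'rV[Rdefinitions.R]_m),
    {within A, continuous f} /\ {within B, continuous g} /\
    (forall x, A x -> B (f x)) /\ (forall y, B y -> A (g y)) /\
    (forall x, A x -> g (f x) = x) /\ (forall y, B y -> f (g y) = y).

Definition triangulation_of_sphere (d : nat) (V : finType) (X : {set {set V}}) : Prop :=
  simplicial_complex X /\ homeomorphic (geom_realization X) (sphere d).

From HB Require Import structures.
From mathcomp Require Import all_boot all_order all_algebra.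
From mathcomp Require Import all_classical all_reals all_analysis.
From mathcomp Require Import Rstruct Rstruct_topology zify ring lra.
Import Order.TTheory GRing.Theory Num.Theory.
Set Implicit Arguments. Unset Strict Implicit. Unset Printing Implicit Defensive.

(** The boundary of the (d+1)-simplex on the vertices 0, ..., d+1 is a d-sphere.
    For m = d+2, ..., N we stack a simplex with apex m on the facet
    {m-d-1, ..., m-1}, i.e. we subdivide that facet stellarly; a stellar
    subdivision of a facet is homeomorphic to the original complex by explicit
    piecewise linear maps moving mass between the facet and its apex.  In the
    resulting stacked sphere every face lies within d+2 consecutive labels, so a
    vertex has at most 2d+2 neighbours and every degree is at most 2^(2d+3).  The
    facets {c-d-1, ..., c} minus c-1 survive all later steps, and for centres c
    spaced 2d+3 apart they are disjoint and nonadjacent.  For d = 1 the sphere is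
    a cycle on which u and u+1 are adjacent only if u = 0 or u+1 = N, so spacing
    3 suffices; this fits the vertex budget (d^2+d+1)k + (d+2)^2. *)

Local Notation R := Rdefinitions.R.

Section Homeomorphism.
Local Open Scope classical_set_scope.

Lemma continuous_within_comp (T U W : topologicalType) (A : set T) (B : set U)
    (f : T -> U) (g : U -> W) :
  {within A, continuous f} -> {within B, continuous g} ->
  (forall x, A x -> B (f x)) -> {within A, continuous (g \o f)}.
Proof.
move=> /subspace_continuousP cf /subspace_continuousP cg fAB.
apply/subspace_continuousP => x Ax.
have f_within : f @ within A (nbhs x) --> within B (nbhs (f x)).
  move=> P BP; have fP : nbhs x [set y | A y -> B (f y) -> P (f y)].
    exact: cf x Ax _ BP.
  change (nbhs x [set y | A y -> P (f y)]).
  by apply: filterS fP => y fPy Ay; exact: fPy Ay (fAB y Ay).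
by move=> Q /(cg _ (fAB x Ax)) /f_within.
Qed.

Lemma homeomorphic_trans m n p (A : set 'rV[R]_m) (B : set 'rV[R]_n)
    (C : set 'rV[R]_p) :
  homeomorphic A B -> homeomorphic B C -> homeomorphic A C.
Proof.
move=> [f1 [g1 [cf1 [cg1 [fAB [gBA [gf1 fg1]]]]]]].
move=> [f2 [g2 [cf2 [cg2 [fBC [gCB [gf2 fg2]]]]]]].
exists (f2 \o f1), (g1 \o g2); split; first exact: continuous_within_comp cf1 cf2 fAB.
split; first exact: continuous_within_comp cg2 cg1 gCB.
split; first by move=> x /fAB /fBC.
split; first by move=> y /gCB /gBA.
split; first by move=> x Ax /=; rewrite gf2 ?gf1 //; exact: fAB.
by move=> y Cy /=; rewrite fg1 ?fg2 //; exact: gCB.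
Qed.

End Homeomorphism.

Section Continuity.
Local Open Scope ring_scope.

Lemma continuous_big (T U : topologicalType) (op : U -> U -> U) (idx : U)
    (I : Type) (r : seq I) (P : pred I) (F : I -> T -> U) x :
  (forall f g : T -> U, {for x, continuous f} -> {for x, continuous g} ->
     {for x, continuous (fun y => op (f y) (g y))}) ->
  (forall i, P i -> {for x, continuous (F i)}) ->
  {for x, continuous (fun y => \big[op/idx]_(i <- r | P i) F i y)}.
Proof.
move=> cop cF; elim: r => [|i r IH].
  have -> : (fun y => \big[op/idx]_(i <- [::] | P i) F i y) = fun=> idx.
    by apply: funext => y; rewrite big_nil.
  exact: cvg_cst.
case Pi: (P i).
  have -> : (fun y => \big[op/idx]_(j <- i :: r | P j) F j y) =
      fun y => op (F i y) (\big[op/idx]_(j <- r | P j) F j y).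
    by apply: funext => y; rewrite big_cons Pi.
  exact: cop (cF i Pi) IH.
have -> : (fun y => \big[op/idx]_(j <- i :: r | P j) F j y) =
    fun y => \big[op/idx]_(j <- r | P j) F j y.
  by apply: funext => y; rewrite big_cons Pi.
exact: IH.
Qed.

Lemma continuous_sum (T : topologicalType) (U : normedModType R) (I : Type)
    (r : seq I) (P : pred I) (F : I -> T -> U) x :
  (forall i, P i -> {for x, continuous (F i)}) ->
  {for x, continuous (fun y => \sum_(i <- r | P i) F i y)}.
Proof. by apply: continuous_big => f g; exact: continuousD. Qed.

Lemma continuous_bigmin (T : topologicalType) (I : Type) (r : seq I) (P : pred I)
    (F : I -> T -> R) (x0 : R) x :
  (forall i, P i -> {for x, continuous (F i)}) ->
  {for x, continuous (fun y => \big[Order.min/x0]_(i <- r | P i) F i y)}.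
Proof. by apply: continuous_big => f g; exact: (@continuous_min _ _ f g). Qed.

Lemma continuous_mx (T : topologicalType) m n (f : T -> 'M[R]_(m, n)) x :
  (forall i j, {for x, continuous (fun y => f y i j)}) -> {for x, continuous f}.
Proof.
move=> cf; have -> : f = fun y => \sum_(i < m) \sum_(j < n) f y i j *: delta_mx i j.
  by apply: funext => y; rewrite -matrix_sum_delta.
by apply: continuous_sum => i _; apply: continuous_sum => j _; exact: continuousZr_tmp.
Qed.

End Continuity.

Section BigMin.
Local Open Scope ring_scope.

Lemma bigmin_attained (I : finType) (P : pred I) (F : I -> R) x0 j :
  P j -> (forall i, P i -> F i <= x0) ->
  exists2 i, P i & \big[Order.min/x0]_(i | P i) F i = F i.
Proof.
move=> Pj le_x0; exists [arg min_(i < j | P i) F i]%O; last exact: bigmin_eq_arg.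
by case: arg_minP.
Qed.

Lemma bigmin_cases (I : finType) (P : pred I) (F : I -> R) x0 :
  \big[Order.min/x0]_(i | P i) F i = x0 \/
  exists2 i, P i & \big[Order.min/x0]_(i | P i) F i = F i.
Proof.
apply: (big_ind (fun r => r = x0 \/ exists2 i, P i & r = F i)); first by left.
  by move=> x y Hx Hy; case: (leP x y).
by move=> i Pi; right; exists i.
Qed.

End BigMin.

Lemma card_ord_range K lo hi :
  #|[set u : 'I_K | lo <= u < hi]| = minn hi K - lo.
Proof.
rewrite -sum1_card big_mkcond /=.
under eq_bigr do rewrite inE.
rewrite -(big_mkord xpredT (fun u => if lo <= u < hi then 1 else 0)).
elim: K => [|K IH]; first by rewrite big_geq // minn0.
rewrite big_nat_recr //= IH.
by case: (leqP lo K) => ? /=; case: (ltnP K hi) => ? /=; lia.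
Qed.

Section VertexCoordinates.
Variable V : finType.
Implicit Types (x y : 'rV[R]_#|V|) (X : {set {set V}}).
Local Open Scope ring_scope.

Definition vcoord (x : 'rV[R]_#|V|) (v : V) : R := x ord0 (enum_rank v).
Definition row_of_fun (h : V -> R) : 'rV[R]_#|V| := \row_i h (enum_val i).

Lemma vcoord_row_of_fun h v : vcoord (row_of_fun h) v = h v.
Proof. by rewrite /vcoord /row_of_fun mxE enum_rankK. Qed.

Lemma vcoordD x y v : vcoord (x + y) v = vcoord x v + vcoord y v.
Proof. by rewrite /vcoord mxE. Qed.

Lemma vcoordZ a x v : vcoord (a *: x) v = a * vcoord x v.
Proof. by rewrite /vcoord mxE. Qed.

Lemma vcoord_inj x y : (forall v, vcoord x v = vcoord y v) -> x = y.
Proof. by move=> xy; apply/rowP => i; have := xy (enum_val i); rewrite /vcoord enum_valK. Qed.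

Lemma sum_vcoord x : \sum_i x ord0 i = \sum_v vcoord x v.
Proof. by rewrite (reindex (@enum_rank V)) //; apply: onW_bij; exact: enum_rank_bij. Qed.

Lemma continuous_vcoord v : continuous (vcoord^~ v).
Proof. by move=> x; exact: (@coord_continuous R 1 #|V| ord0 (enum_rank v)). Qed.

Lemma geom_realizationP X x : geom_realization X x <->
  [/\ forall v, 0 <= vcoord x v, \sum_v vcoord x v = 1 &
      exists2 t, t \in X & forall v, vcoord x v != 0 -> v \in t].
Proof.
rewrite /geom_realization /= sum_vcoord; split.
  move=> [x_ge0 [x_sum [t tX x_supp]]]; split => // [v|]; first exact: x_ge0.
  by exists t => // v /x_supp; rewrite enum_rankK.
move=> [x_ge0 x_sum [t tX x_supp]]; split.
  by move=> i; have := x_ge0 (enum_val i); rewrite /vcoord enum_valK.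
split => //; exists t => // i; rewrite -[in X in X -> _](enum_valK i); exact: x_supp.
Qed.

Lemma realization_vcoord_le1 X x v :
  geom_realization X x -> vcoord x v <= 1.
Proof.
case/geom_realizationP => x_ge0 <- _; rewrite (bigD1 v) //= lerDl.
by apply: sumr_ge0 => u _; exact: x_ge0.
Qed.

Lemma vcoord_outside_support x (t : {set V}) v :
  (forall u, vcoord x u != 0 -> u \in t) -> v \notin t -> vcoord x v = 0.
Proof. by move=> x_supp vt; apply/eqP; apply: contraNT vt; exact: x_supp. Qed.

End VertexCoordinates.

Definition stellar (V : finType) (X : {set {set V}}) (s : {set V}) (w : V) :
    {set {set V}} :=
  [set t in X | t != s] :|: [set w |: r | r in powerset s :\ s].

Section StellarSubdivision.
Variables (V : finType) (X : {set {set V}}) (s : {set V}) (w : V).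
Hypothesis s_in_X : s \in X.
Hypothesis s_facet : forall t, t \in X -> s \subset t -> t = s.
Hypothesis s_card : (1 < #|s|)%N.
Hypothesis w_fresh : forall t, t \in X -> w \notin t.
Local Open Scope ring_scope.

Lemma w_notin_s : w \notin s. Proof. exact: w_fresh. Qed.

Lemma stellarP t : t \in stellar X s w <->
  (t \in X /\ t != s) \/ exists2 r : {set V}, r \proper s & t = w |: r.
Proof.
rewrite /stellar !inE; split.
  case/orP => [/andP[tX ts]|/imsetP[r]]; first by left.
  by rewrite !inE => /andP[sr rs] ->; right; exists r; rewrite // finset.properEneq sr rs.
case => [[-> ->] //|[r]]; rewrite finset.properEneq => /andP[sr rs] ->.
by apply/orP; right; apply: imset_f; rewrite !inE sr rs.
Qed.

Lemma not_subset_face t : t \in stellar X s w -> ~~ (s \subset t :\ w).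
Proof.
case/stellarP => [[tX ts]|[r rs ->]].
  apply: contra ts => stw.
  by rewrite (s_facet tX (fintype.subset_trans stw (subsetDl t [set w]))).
have wr : w \notin r by apply: contra w_notin_s; exact: (fintype.subsetP (proper_sub rs)).
by rewrite setU1K // proper_subn.
Qed.

Definition ns : R := #|s|%:R.

Lemma ns_gt0 : 0 < ns.
Proof. by rewrite ltr0n; apply: ltnW. Qed.

Lemma ns_neq0 : ns != 0.
Proof. by rewrite gt_eqF // ns_gt0. Qed.

Definition stellar_dir (u : V) : R := (if u \in s then ns^-1 else 0) - (u == w)%:R.

Lemma stellar_dir_w : stellar_dir w = -1.
Proof. by rewrite /stellar_dir (negbTE w_notin_s) eqxx sub0r. Qed.

Lemma stellar_dir_s u : u \in s -> stellar_dir u = ns^-1.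
Proof.
move=> us; have uw : u != w by apply: contraNneq w_notin_s => <-.
by rewrite /stellar_dir us (negbTE uw) subr0.
Qed.

Lemma stellar_dir_out u : u \notin s -> u != w -> stellar_dir u = 0.
Proof. by move=> us uw; rewrite /stellar_dir (negbTE us) (negbTE uw) subr0. Qed.

Lemma sum_stellar_dir : \sum_u stellar_dir u = 0.
Proof.
rewrite big_split /= sumrN -big_mkcond sumr_const -mulr_natr -/ns.
rewrite (bigD1 w) //= eqxx big1 => [|u /negbTE -> //].
by rewrite mulVf ?addr0 ?subrr // ns_neq0.
Qed.

Definition smin (y : 'rV[R]_#|V|) : R := \big[Order.min/1]_(v in s) vcoord y v.

(* [to_stellar] moves the mass [smin y] from each vertex of [s] onto [w];
   [of_stellar] spreads the mass of [w] evenly back over [s]. *)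
Definition to_stellar y := y - smin y *: row_of_fun (fun u => ns * stellar_dir u).
Definition of_stellar x := x + vcoord x w *: row_of_fun stellar_dir.

Lemma vcoord_to_stellar y u :
  vcoord (to_stellar y) u = vcoord y u - ns * smin y * stellar_dir u.
Proof.
by rewrite /to_stellar vcoordD -scaleNr vcoordZ vcoord_row_of_fun mulNr mulrCA mulrA.
Qed.

Lemma vcoord_to_stellar_w y : vcoord (to_stellar y) w = vcoord y w + ns * smin y.
Proof. by rewrite vcoord_to_stellar stellar_dir_w mulrN1 opprK. Qed.

Lemma vcoord_to_stellar_s y u : u \in s -> vcoord (to_stellar y) u = vcoord y u - smin y.
Proof.
by move=> us; rewrite vcoord_to_stellar stellar_dir_s // mulrAC mulfV ?mul1r ?ns_neq0.
Qed.

Lemma vcoord_to_stellar_out y u :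
  u \notin s -> u != w -> vcoord (to_stellar y) u = vcoord y u.
Proof. by move=> us uw; rewrite vcoord_to_stellar stellar_dir_out // mulr0 subr0. Qed.

Lemma vcoord_of_stellar x u :
  vcoord (of_stellar x) u = vcoord x u + vcoord x w * stellar_dir u.
Proof. by rewrite /of_stellar vcoordD vcoordZ vcoord_row_of_fun. Qed.

Lemma vcoord_of_stellar_w x : vcoord (of_stellar x) w = 0.
Proof. by rewrite vcoord_of_stellar stellar_dir_w mulrN1 subrr. Qed.

Lemma vcoord_of_stellar_s x u :
  u \in s -> vcoord (of_stellar x) u = vcoord x u + vcoord x w / ns.
Proof. by move=> us; rewrite vcoord_of_stellar stellar_dir_s. Qed.

Lemma vcoord_of_stellar_out x u :
  u \notin s -> u != w -> vcoord (of_stellar x) u = vcoord x u.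
Proof. by move=> us uw; rewrite vcoord_of_stellar stellar_dir_out // mulr0 addr0. Qed.

Lemma smin_le y v : v \in s -> smin y <= vcoord y v.
Proof. exact: bigmin_le_cond. Qed.

Lemma smin_ge0 y : (forall v, 0 <= vcoord y v) -> 0 <= smin y.
Proof. by move=> y_ge0; apply: le_bigmin => // v _; exact: y_ge0. Qed.

Lemma realization_w_eq0 y : geom_realization X y -> vcoord y w = 0.
Proof.
case/geom_realizationP => _ _ [t tX y_supp].
exact: vcoord_outside_support y_supp (w_fresh tX).
Qed.

Lemma to_stellar_ge0 y u : geom_realization X y -> 0 <= vcoord (to_stellar y) u.
Proof.
move=> /geom_realizationP [y_ge0 _ _].
case: (eqVneq u w) => [->|uw].
  rewrite vcoord_to_stellar_w; apply: addr_ge0 (y_ge0 w) _.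
  by apply: mulr_ge0; [exact: ltW ns_gt0 | exact: smin_ge0].
have [us|us] := boolP (u \in s); last by rewrite vcoord_to_stellar_out.
by rewrite vcoord_to_stellar_s // subr_ge0 smin_le.
Qed.

Lemma to_stellar_support y : geom_realization X y ->
  exists2 t, t \in stellar X s w & forall u, vcoord (to_stellar y) u != 0 -> u \in t.
Proof.
move=> yX; have /geom_realizationP [y_ge0 _ [t tX y_supp]] := yX.
have [ts|nts] := eqVneq t s.
  have [v0 v0s smin_v0] : exists2 v0, v0 \in s & smin y = vcoord y v0.
    have [v0 v0s] : exists v0, v0 \in s by apply/set0Pn; rewrite -card_gt0 ltnW.
    by apply: bigmin_attained v0s _ => v _; exact: realization_vcoord_le1 yX.
  exists (w |: (s :\ v0)); first by apply/stellarP; right; exists (s :\ v0); rewrite ?properD1.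
  move=> u; rewrite !inE; case: (eqVneq u w) => //= uw.
  have [us|us] := boolP (u \in s); last first.
    by rewrite vcoord_to_stellar_out // => /y_supp; rewrite ts (negbTE us).
  by rewrite andbT vcoord_to_stellar_s //; apply: contraNN => /eqP ->; rewrite smin_v0 subrr.
have [v vs vt] : exists2 v, v \in s & v \notin t.
  by apply/subsetPn; apply: contra nts => /(s_facet tX) ->.
have smin0 : smin y = 0.
  by apply: le_anti; rewrite smin_ge0 // -(vcoord_outside_support y_supp vt) smin_le.
exists t; first by apply/stellarP; left.
by move=> u; rewrite vcoord_to_stellar smin0 mulr0 mul0r subr0; exact: y_supp.
Qed.

Lemma to_stellar_realization y :
  geom_realization X y -> geom_realization (stellar X s w) (to_stellar y).
Proof.
move=> yX; apply/geom_realizationP; split.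
- by move=> u; exact: to_stellar_ge0.
- have /geom_realizationP [_ y_sum _] := yX.
  under eq_bigr do rewrite vcoord_to_stellar.
  by rewrite sumrB -mulr_sumr sum_stellar_dir mulr0 subr0.
- exact: to_stellar_support.
Qed.

Lemma of_to_stellar y : geom_realization X y -> of_stellar (to_stellar y) = y.
Proof.
move=> /realization_w_eq0 yw; apply: vcoord_inj => u.
by rewrite vcoord_of_stellar vcoord_to_stellar_w vcoord_to_stellar yw; ring.
Qed.

Lemma stellar_realization_zero x : geom_realization (stellar X s w) x ->
  exists2 v, v \in s & vcoord x v = 0.
Proof.
case/geom_realizationP => _ _ [t tX x_supp].
have /subsetPn [v vs vt] := not_subset_face tX.
exists v => //; apply: vcoord_outside_support x_supp _.
by apply: contra vt => vt; rewrite !inE vt andbT; apply: contraNneq w_notin_s => <-.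
Qed.

Lemma of_stellar_realization x :
  geom_realization (stellar X s w) x -> geom_realization X (of_stellar x).
Proof.
move=> /geom_realizationP [x_ge0 x_sum [t tX x_supp]].
apply/geom_realizationP; split.
- move=> u; case: (eqVneq u w) => [->|uw]; first by rewrite vcoord_of_stellar_w.
  have [us|us] := boolP (u \in s); last by rewrite vcoord_of_stellar_out.
  by rewrite vcoord_of_stellar_s // addr_ge0 ?divr_ge0 ?x_ge0 ?(ltW ns_gt0).
- under eq_bigr do rewrite vcoord_of_stellar.
  by rewrite big_split /= -mulr_sumr sum_stellar_dir mulr0 addr0.
case/stellarP: tX => [[tX _]|[r rs tE]].
  have xw : vcoord x w = 0 by apply: vcoord_outside_support x_supp (w_fresh tX).
  by exists t => // u; rewrite vcoord_of_stellar xw mul0r addr0; exact: x_supp.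
exists s => // u; case: (eqVneq u w) => [->|uw]; first by rewrite vcoord_of_stellar_w eqxx.
have [//|us] := boolP (u \in s); rewrite vcoord_of_stellar_out // => /x_supp.
by rewrite tE !inE (negbTE uw) => /(fintype.subsetP (proper_sub rs)); rewrite (negbTE us).
Qed.

Lemma to_of_stellar x :
  geom_realization (stellar X s w) x -> to_stellar (of_stellar x) = x.
Proof.
move=> xS; have [v0 v0s xv0] := stellar_realization_zero xS.
have /geom_realizationP [x_ge0 _ _] := xS.
have smin_of : smin (of_stellar x) = vcoord x w / ns.
  apply: le_anti; apply/andP; split.
    by apply: le_trans (smin_le _ v0s) _; rewrite vcoord_of_stellar_s // xv0 add0r.
  apply: le_bigmin => [|v vs]; last by rewrite vcoord_of_stellar_s // lerDr.
  rewrite ler_pdivrMr ?ns_gt0 // mul1r.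
  apply: le_trans (realization_vcoord_le1 w xS) _.
  by rewrite (ler_nat R 1); apply: ltnW.
apply: vcoord_inj => u; rewrite vcoord_to_stellar vcoord_of_stellar smin_of.
by field; exact: ns_neq0.
Qed.

Lemma continuous_smin : continuous smin.
Proof. by move=> y; apply: continuous_bigmin => v _; exact: continuous_vcoord. Qed.

Lemma continuous_to_stellar : continuous to_stellar.
Proof.
have -> : to_stellar = id - (fun y => smin y *: row_of_fun (fun u => ns * stellar_dir u)).
  by [].
move=> y; apply: continuousB; first exact: cvg_id.
by apply: continuousZr_tmp; exact: continuous_smin.
Qed.

Lemma continuous_of_stellar : continuous of_stellar.
Proof.
have -> : of_stellar = id + (fun x => vcoord x w *: row_of_fun stellar_dir) by [].
move=> x; apply: continuousD; first exact: cvg_id.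
by apply: continuousZr_tmp; exact: continuous_vcoord.
Qed.

Lemma stellar_homeomorphic :
  homeomorphic (geom_realization (stellar X s w)) (geom_realization X).
Proof.
exists of_stellar, to_stellar.
split; first exact: continuous_subspaceT continuous_of_stellar.
split; first exact: continuous_subspaceT continuous_to_stellar.
split; first exact: of_stellar_realization.
split; first exact: to_stellar_realization.
split; first exact: to_of_stellar.
exact: of_to_stellar.
Qed.

Lemma stellar_simplicial :
  simplicial_complex X -> simplicial_complex (stellar X s w).
Proof.
move=> [X0 X_closed]; split.
  apply/negP => /stellarP [[X0' _]|[r _ /setP /(_ w)]]; first by rewrite X0' in X0.
  by rewrite !inE eqxx.
move=> a b /stellarP a_face ba b0; apply/stellarP.
case: a_face => [[aX a_neq_s]|[r rs ar]].
  left; split; first exact: X_closed aX ba b0.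
  by apply: contra a_neq_s => /eqP bs; rewrite (s_facet aX) // -bs.
have b_wr : b :\ w \subset r.
  apply/fintype.subsetP => u; rewrite !inE => /andP[uw ub].
  by move: (fintype.subsetP ba u ub); rewrite ar !inE (negbTE uw).
have b_rs : b :\ w \proper s := sub_proper_trans b_wr rs.
have [wb|wb] := boolP (w \in b).
  by right; exists (b :\ w); rewrite // finset.setD1K.
have b_s : b \proper s.
  apply: (sub_proper_trans _ rs); apply: fintype.subset_trans b_wr.
  by apply/fintype.subsetP => u ub; rewrite !inE ub andbT; apply: contraNneq wb => <-.
left; split; first exact: X_closed s_in_X (proper_sub b_s) b0.
by apply: contraTneq b_s => ->; rewrite fintype.properxx.
Qed.

End StellarSubdivision.

Section SimplexBoundary.
Variables (V : finType) (n : nat) (a : 'I_n.+2 -> V).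
Implicit Types (x : 'rV[R]_#|V|) (z : 'rV[R]_n.+1).

Definition simplex_vertices : {set V} := [set a i | i in 'I_n.+2].

Definition simplex_boundary : {set {set V}} :=
  [set t : {set V} | (t != finset.set0) && (t \proper simplex_vertices)].

Lemma simplex_boundary_simplicial : simplicial_complex simplex_boundary.
Proof.
split; first by rewrite inE eqxx.
move=> s t; rewrite !inE => /andP[_ sp] ts ->; exact: sub_proper_trans ts sp.
Qed.

Hypothesis a_inj : injective a.
Local Open Scope ring_scope.

(* [to_sphere] is the radial projection from the barycentre, read in the affine
   chart x |-> (x_(a j) - x_(a (n+1)))_j of the hyperplane of barycentric
   coordinates; [of_sphere] inverts it by shifting the extended coordinates
   (z, 0) until their minimum is 0 and normalising their sum to 1. *)
Definition centered x : 'rV[R]_n.+1 :=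
  \row_j (vcoord x (a (lift ord_max j)) - vcoord x (a ord_max)).
Definition sqnorm z : R := \sum_j z ord0 j ^+ 2.
Definition to_sphere x : 'rV[R]_n.+1 := (Num.sqrt (sqnorm (centered x)))^-1 *: centered x.

Definition zmin z : R := \big[Order.min/0]_j z ord0 j.
Definition shifted z (i : 'I_n.+2) : R :=
  (if unlift ord_max i is Some j then z ord0 j else 0) - zmin z.
Definition shifted_sum z : R := \sum_i shifted z i.
Definition of_sphere z : 'rV[R]_#|V| :=
  row_of_fun (fun v =>
    if [pick i | a i == v] is Some i then shifted z i / shifted_sum z else 0).

Lemma shifted_lift z j : shifted z (lift ord_max j) = z ord0 j - zmin z.
Proof. by rewrite /shifted liftK. Qed.

Lemma shifted_max z : shifted z ord_max = - zmin z.
Proof. by rewrite /shifted unlift_none add0r. Qed.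

Lemma pick_a i : [pick j | a j == a i] = Some i.
Proof. by case: pickP => [j /eqP /a_inj -> //|/(_ i)]; rewrite eqxx. Qed.

Lemma pick_not_vertex v : v \notin simplex_vertices -> [pick j | a j == v] = None.
Proof. by move=> vS; case: pickP => [j /eqP aj|//]; rewrite -aj imset_f in vS. Qed.

Lemma sum_simplex_vertices (h : V -> R) :
  (forall v, v \notin simplex_vertices -> h v = 0) -> \sum_v h v = \sum_i h (a i).
Proof.
move=> h0; rewrite (bigID (mem simplex_vertices)) /= [X in _ + X]big1 ?addr0 //.
by rewrite big_imset //= => i j _ _; exact: a_inj.
Qed.

Lemma simplex_boundaryP x : geom_realization simplex_boundary x ->
  [/\ forall v, 0 <= vcoord x v, \sum_i vcoord x (a i) = 1,
      forall v, v \notin simplex_vertices -> vcoord x v = 0 &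
      exists j, vcoord x (a j) = 0].
Proof.
move/geom_realizationP => [x_ge0 x_sum [t]].
rewrite inE => /andP[_ t_proper] x_supp.
have x_out v : v \notin simplex_vertices -> vcoord x v = 0.
  move=> vS; apply: vcoord_outside_support x_supp _.
  by apply: contra vS; exact: (fintype.subsetP (proper_sub t_proper)).
split => //; first by rewrite -sum_simplex_vertices.
case/fintype.properP: t_proper => _ [_ /imsetP [j _ ->] ajt].
by exists j; exact: vcoord_outside_support x_supp ajt.
Qed.

Lemma zmin_le0 z : zmin z <= 0.
Proof. exact: bigmin_le_id. Qed.

Lemma zmin_le z j : zmin z <= z ord0 j.
Proof. exact: bigmin_le_cond. Qed.

Lemma shifted_ge0 z i : 0 <= shifted z i.
Proof.
case: (unliftP ord_max i) => [j ->|->]; last by rewrite shifted_max oppr_ge0 zmin_le0.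
by rewrite shifted_lift subr_ge0 zmin_le.
Qed.

Lemma shifted_zero z : exists i, shifted z i = 0.
Proof.
case: (bigmin_cases xpredT (fun j => z ord0 j) 0) => [zmin0|[j _ zminj]].
  by exists ord_max; rewrite shifted_max /zmin zmin0 oppr0.
by exists (lift ord_max j); rewrite shifted_lift /zmin zminj subrr.
Qed.

Lemma shifted_sum_gt0 z : sphere n z -> 0 < shifted_sum z.
Proof.
rewrite /sphere /= => z1; rewrite lt0r sumr_ge0 ?andbT => [|i _]; last exact: shifted_ge0.
apply/negP => /eqP /psumr_eq0P shifted0.
have {}shifted0 i : shifted z i = 0 by apply: shifted0 => // k _; exact: shifted_ge0.
have zmin0 : zmin z = 0 by apply/eqP; rewrite -oppr_eq0 -shifted_max shifted0.
move: z1; rewrite big1 => [/eqP|j _]; first by rewrite eq_sym oner_eq0.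
by have := shifted0 (lift ord_max j); rewrite shifted_lift zmin0 subr0 => ->; rewrite expr0n.
Qed.

Lemma vcoord_of_sphere z i : vcoord (of_sphere z) (a i) = shifted z i / shifted_sum z.
Proof. by rewrite /of_sphere vcoord_row_of_fun pick_a. Qed.

Lemma vcoord_of_sphere_out z v :
  v \notin simplex_vertices -> vcoord (of_sphere z) v = 0.
Proof. by move=> vS; rewrite /of_sphere vcoord_row_of_fun pick_not_vertex. Qed.

Lemma of_sphere_realization z :
  sphere n z -> geom_realization simplex_boundary (of_sphere z).
Proof.
move=> /shifted_sum_gt0 sum_gt0; apply/geom_realizationP; split.
- move=> v; rewrite /of_sphere vcoord_row_of_fun; case: pickP => // i _.
  by rewrite divr_ge0 ?shifted_ge0 ?ltW.
- rewrite (sum_simplex_vertices (@vcoord_of_sphere_out z)).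
  under eq_bigr do rewrite vcoord_of_sphere.
  by rewrite -mulr_suml mulfV // gt_eqF.
have [i0 shifted_i0] := shifted_zero z.
have [j0 j0_neq] : exists j0 : 'I_n.+2, j0 != i0.
  exists (if i0 == ord0 then ord_max else ord0).
  by case: (eqVneq i0 ord0) => [->|i0_neq] //; rewrite eq_sym.
exists (simplex_vertices :\ a i0).
  rewrite inE properD1 ?imset_f // andbT; apply/set0Pn; exists (a j0).
  by rewrite !inE imset_f // andbT (inj_eq a_inj).
move=> v; have [/imsetP [i _ ->]|vS] := boolP (v \in simplex_vertices); last first.
  by rewrite vcoord_of_sphere_out ?eqxx.
rewrite vcoord_of_sphere !inE imset_f // andbT (inj_eq a_inj).
by apply: contraNneq => ->; rewrite shifted_i0 mul0r.
Qed.

Lemma centered_of_sphere z : centered (of_sphere z) = (shifted_sum z)^-1 *: z.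
Proof.
apply/rowP => j; rewrite !mxE !vcoord_of_sphere shifted_lift shifted_max.
by rewrite -mulrBl opprK subrK mulrC.
Qed.

Lemma to_of_sphere z : sphere n z -> to_sphere (of_sphere z) = z.
Proof.
move=> z1; have sum_gt0 := shifted_sum_gt0 z1; move: z1; rewrite /sphere /= => z1.
rewrite /to_sphere centered_of_sphere /sqnorm.
have -> : \sum_j ((shifted_sum z)^-1 *: z) ord0 j ^+ 2 = (shifted_sum z)^-1 ^+ 2.
  by under eq_bigr do rewrite mxE exprMn; rewrite -mulr_sumr z1 mulr1.
rewrite sqrtr_sqr ger0_norm ?invr_ge0 ?ltW // invrK scalerA mulfV ?scale1r //.
by rewrite gt_eqF.
Qed.

Lemma sqnorm_centered_gt0 x :
  geom_realization simplex_boundary x -> 0 < sqnorm (centered x).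
Proof.
move=> /simplex_boundaryP [_ x_sum _ [j0 x_j0]].
rewrite lt0r sumr_ge0 ?andbT => [|j _]; last exact: sqr_ge0.
apply/negP => /eqP /psumr_eq0P centered0.
have x_lift j : vcoord x (a (lift ord_max j)) = vcoord x (a ord_max).
  have /eqP := centered0 (fun k _ => sqr_ge0 _) j isT.
  by rewrite sqrf_eq0 mxE subr_eq0 => /eqP.
have x_max : vcoord x (a ord_max) = 0.
  by case: (unliftP ord_max j0) x_j0 => [j ->|->] //; rewrite x_lift.
move: x_sum; rewrite big1 => [/eqP|i _]; first by rewrite eq_sym oner_eq0.
by case: (unliftP ord_max i) => [j ->|->] //; rewrite x_lift.
Qed.

Lemma to_sphere_sphere x :
  geom_realization simplex_boundary x -> sphere n (to_sphere x).
Proof.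
move=> /sqnorm_centered_gt0 norm_gt0; rewrite /sphere /= /to_sphere.
under eq_bigr do rewrite mxE exprMn.
by rewrite -mulr_sumr exprVn sqr_sqrtr ?ltW // mulVf // gt_eqF.
Qed.

Lemma of_to_sphere x :
  geom_realization simplex_boundary x -> of_sphere (to_sphere x) = x.
Proof.
move=> xS; have norm_gt0 := sqnorm_centered_gt0 xS.
move/simplex_boundaryP: xS => [x_ge0 x_sum x_out [j0 x_j0]].
pose c : R := (Num.sqrt (sqnorm (centered x)))^-1.
have c_gt0 : 0 < c by rewrite invr_gt0 sqrtr_gt0.
have to_sphereE j : to_sphere x ord0 j =
    c * (vcoord x (a (lift ord_max j)) - vcoord x (a ord_max)).
  by rewrite /to_sphere !mxE.
have zminE : zmin (to_sphere x) = - (c * vcoord x (a ord_max)).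
  apply: le_anti; apply/andP; split.
    case: (unliftP ord_max j0) x_j0 => [j ->|->] x_j0.
      by apply: le_trans (zmin_le _ j) _; rewrite to_sphereE x_j0 sub0r mulrN.
    by rewrite x_j0 mulr0 oppr0 zmin_le0.
  rewrite /zmin; apply: le_bigmin => [|j _].
    by rewrite oppr_le0; apply: mulr_ge0; [exact: ltW | exact: x_ge0].
  by rewrite to_sphereE mulrBr; have := mulr_ge0 (ltW c_gt0) (x_ge0 (a (lift ord_max j))); lra.
have shiftedE i : shifted (to_sphere x) i = c * vcoord x (a i).
  case: (unliftP ord_max i) => [j ->|->]; last by rewrite shifted_max zminE opprK.
  by rewrite shifted_lift zminE to_sphereE opprK mulrBr subrK.
have sumE : shifted_sum (to_sphere x) = c.
  by rewrite /shifted_sum; under eq_bigr do rewrite shiftedE; rewrite -mulr_sumr x_sum mulr1.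
apply: vcoord_inj => v; have [/imsetP [i _ ->]|vS] := boolP (v \in simplex_vertices).
  by rewrite vcoord_of_sphere shiftedE sumE mulrC mulrA mulVf ?mul1r // gt_eqF.
by rewrite vcoord_of_sphere_out // x_out.
Qed.

Lemma continuous_centered : continuous centered.
Proof.
move=> x; apply: continuous_mx => i j.
have -> : (fun y => centered y i j) =
    (fun y => vcoord y (a (lift ord_max j))) - (fun y => vcoord y (a ord_max)).
  by apply: funext => y; rewrite mxE.
by apply: (@continuousB R R^o); exact: continuous_vcoord.
Qed.

Lemma continuous_sqnorm : continuous sqnorm.
Proof.
move=> z; apply: (@continuous_sum _ R^o) => j _.
have cj : {for z, continuous (fun z => z ord0 j)} by exact: coord_continuous.
have -> : (fun z => z ord0 j ^+ 2) = (fun z => z ord0 j) \* (fun z => z ord0 j).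
  by apply: funext => y; rewrite expr2.
exact: continuousM.
Qed.

Lemma continuous_to_sphere x :
  geom_realization simplex_boundary x -> {for x, continuous to_sphere}.
Proof.
move=> /sqnorm_centered_gt0 norm_gt0; apply: continuousZ; last exact: continuous_centered.
apply: continuousV; first by rewrite gt_eqF // sqrtr_gt0.
apply: (@continuous_comp _ _ _ (sqnorm \o centered) Num.sqrt); last exact: sqrt_continuous.
by apply: continuous_comp; [exact: continuous_centered | exact: continuous_sqnorm].
Qed.

Lemma continuous_zmin : continuous zmin.
Proof. by move=> z; apply: continuous_bigmin => j _; exact: coord_continuous. Qed.

Lemma continuous_shifted i : continuous (shifted^~ i).
Proof.
move=> z; rewrite /shifted; case: (unlift ord_max i) => [j|].
  have -> : (fun z => z ord0 j - zmin z) =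
      (fun z => z ord0 j) - (zmin : 'rV[R]_n.+1 -> R^o) by [].
  by apply: (@continuousB R R^o); [exact: coord_continuous | exact: continuous_zmin].
have -> : (fun z => 0 - zmin z) = (fun=> 0 : R^o) - (zmin : 'rV[R]_n.+1 -> R^o) by [].
apply: (@continuousB R R^o); last exact: continuous_zmin.
exact: (@cvg_cst _ (0 : R^o) _ (nbhs z) _).
Qed.

Lemma continuous_of_sphere z : sphere n z -> {for z, continuous of_sphere}.
Proof.
move=> /shifted_sum_gt0 sum_gt0; apply: continuous_mx => i j.
have -> : (fun z => of_sphere z i j) = fun z =>
    if [pick k | a k == enum_val j] is Some k then shifted z k / shifted_sum z else 0.
  by apply: funext => y; rewrite /of_sphere /row_of_fun mxE.
case: pickP => [k _|_]; last exact: (@cvg_cst _ (0 : R) _ (nbhs z) _).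
have -> : (fun z => shifted z k / shifted_sum z) =
    (fun z => shifted z k) \* (fun z => (shifted_sum z)^-1) by [].
apply: continuousM; first exact: continuous_shifted.
apply: continuousV; first by rewrite gt_eqF.
by apply: (@continuous_sum _ R^o) => k' _; exact: continuous_shifted.
Qed.

Lemma simplex_boundary_homeomorphic :
  homeomorphic (geom_realization simplex_boundary) (sphere n).
Proof.
exists to_sphere, of_sphere.
split; first by apply: continuous_in_subspaceT => x /[!inE]; exact: continuous_to_sphere.
split; first by apply: continuous_in_subspaceT => z /[!inE]; exact: continuous_of_sphere.
split; first exact: to_sphere_sphere.
split; first exact: of_sphere_realization.
split; first exact: of_to_sphere.
exact: to_of_sphere.
Qed.

End SimplexBoundary.

Lemma nonadjacent_sym (V : finType) (Y : {set {set V}}) s t :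
  nonadjacent Y s t -> nonadjacent Y t s.
Proof. by move=> st x y xt ys; rewrite finset.setUC; exact: st. Qed.

Section StackedSphere.
Variables (d N : nat).
Hypothesis d_gt0 : 0 < d.
Hypothesis dN : d.+2 <= N.+1.
Implicit Types (X : {set {set 'I_N.+1}}) (r t : {set 'I_N.+1}) (u v : 'I_N.+1).

Definition base_vertex (i : 'I_d.+2) : 'I_N.+1 := widen_ord dN i.

Lemma base_vertex_inj : injective base_vertex.
Proof. by move=> i j /(congr1 val) ij; apply: val_inj. Qed.

Lemma mem_base_vertices u : (u \in simplex_vertices base_vertex) = (u < d.+2).
Proof.
apply/imsetP/idP => [[i _ ->]|ud]; first by rewrite /= ltn_ord.
by exists (Ordinal ud) => //; apply: val_inj.
Qed.

Lemma card_base_vertices : #|simplex_vertices base_vertex| = d.+2.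
Proof. by rewrite card_imset ?card_ord //; exact: base_vertex_inj. Qed.

Definition window m : {set 'I_N.+1} := [set u : 'I_N.+1 | m - d.+1 <= u < m].

(* Created when vertex [c] is stacked on [window c]; never subdivided afterwards. *)
Definition gap_facet c : {set 'I_N.+1} :=
  [set u : 'I_N.+1 | (c - d.+1 <= u <= c) && (u != c.-1 :> nat)].

Fixpoint stacked j : {set {set 'I_N.+1}} :=
  if j is j'.+1 then stellar (stacked j') (window (d.+2 + j')) (inord (d.+2 + j'))
  else simplex_boundary base_vertex.

Lemma card_window m : d.+1 <= m <= N.+1 -> #|window m| = d.+1.
Proof. by move=> dm; rewrite card_ord_range; lia. Qed.

Lemma card_gap_facet c : d.+1 <= c <= N -> #|gap_facet c| = d.+1.
Proof.
move=> dc; have c1 : c.-1 < N.+1 by lia.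
have -> : gap_facet c = [set u : 'I_N.+1 | c - d.+1 <= u < c.+1] :\ inord c.-1.
  by apply/setP => u; rewrite !inE -val_eqE /= inordK //; apply/idP/idP => ?; lia.
have := cardsD1 (inord c.-1 : 'I_N.+1) [set u : 'I_N.+1 | c - d.+1 <= u < c.+1].
rewrite card_ord_range inE inordK //; have -> : c - d.+1 <= c.-1 < c.+1 by lia.
by rewrite add1n; set K := #|_ :\ _| => E; lia.
Qed.

(* [cycle_edge] is needed only for d = 1, where the stacked sphere is a cycle
   in which the window bound [face_spread] alone does not separate facets. *)
Record stacked_inv X m : Prop := StackedInv {
  card_face : forall t, t \in X -> #|t| <= d.+1;
  face_lt : forall t u, t \in X -> u \in t -> u < m;
  face_spread : forall t u v, t \in X -> u \in t -> v \in t -> u <= v + d.+1;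
  window_face : window m \in X;
  vertex_face : forall u, u < m -> [set u] \in X;
  gap_facet_face : forall c, d.+2 <= c < m -> gap_facet c \in X;
  cycle_edge : d = 1 -> forall t u v, t \in X -> u \in t -> v \in t ->
    v = u.+1 :> nat -> u = 0 :> nat \/ v = m.-1 :> nat }.

Lemma stacked_inv_base : stacked_inv (simplex_boundary base_vertex) d.+2.
Proof.
have base_lt t u : t \in simplex_boundary base_vertex -> u \in t -> u < d.+2.
  by rewrite inE => /andP[_ /proper_sub /fintype.subsetP tS] /tS; rewrite mem_base_vertices.
split => //.
- move=> t; rewrite inE => /andP[_ /proper_card]; by rewrite card_base_vertices.
- by move=> t u v tX /(base_lt _ _ tX) ud /(base_lt _ _ tX) vd; lia.
- rewrite inE properEcard card_base_vertices card_window; last by lia.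
  rewrite ltnSn andbT; apply/andP; split.
    by apply/set0Pn; exists (inord 1); rewrite inE inordK; lia.
  by apply/fintype.subsetP => u; rewrite inE mem_base_vertices => /andP[_].
- move=> u ud; rewrite inE properEcard card_base_vertices cards1 /= andbT.
  apply/andP; split; first by apply/set0Pn; exists u; rewrite inE.
  by apply/fintype.subsetP => v; rewrite inE mem_base_vertices => /eqP ->.
- by move=> c; lia.
- by move=> d1 t u v tX /(base_lt _ _ tX) ud /(base_lt _ _ tX) vd; lia.
Qed.

Section StackingStep.
Variables (X : {set {set 'I_N.+1}}) (m : nat).
Hypotheses (X_inv : stacked_inv X m) (m_le_N : m <= N) (m_ge : d.+2 <= m).
Local Notation w := (inord m : 'I_N.+1).
Local Notation X' := (stellar X (window m) w).

Lemma new_vertexE : w = m :> nat.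
Proof. by rewrite inordK //; lia. Qed.

Lemma card_window_step : #|window m| = d.+1.
Proof. by apply: card_window; lia. Qed.

Lemma window_facet t : t \in X -> window m \subset t -> t = window m.
Proof.
move=> tX wt; apply/eqP; rewrite eq_sym eqEcard wt card_window_step /=.
exact: (card_face X_inv tX).
Qed.

Lemma window_card_gt1 : 1 < #|window m|.
Proof. by rewrite card_window_step; lia. Qed.

Lemma new_vertex_fresh t : t \in X -> w \notin t.
Proof. by move=> tX; apply/negP => /(face_lt X_inv tX); rewrite new_vertexE ltnn. Qed.

Lemma new_face_range r u :
  r \subset window m -> u \in w |: r -> m - d.+1 <= u <= m.
Proof.
move=> rw; rewrite in_setU1 => /orP [/eqP ->|/(fintype.subsetP rw)].
  by rewrite new_vertexE; lia.
by rewrite inE; lia.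
Qed.

Lemma step_card_face t : t \in X' -> #|t| <= d.+1.
Proof.
case/stellarP => [[tX _]|[r rw ->]]; first exact: (card_face X_inv tX).
have := proper_card rw; rewrite card_window_step cardsU1.
by case: (w \in r); lia.
Qed.

Lemma step_face_lt t u : t \in X' -> u \in t -> u < m.+1.
Proof.
case/stellarP => [[tX _]|[r rw ->]] ut; first by have := face_lt X_inv tX ut; lia.
by have := new_face_range (proper_sub rw) ut; lia.
Qed.

Lemma step_face_spread t u v : t \in X' -> u \in t -> v \in t -> u <= v + d.+1.
Proof.
case/stellarP => [[tX _]|[r rw ->]] ut vt; first by have := face_spread X_inv tX ut vt.
by have := new_face_range (proper_sub rw) ut; have := new_face_range (proper_sub rw) vt; lia.
Qed.

Lemma step_window_face : window m.+1 \in X'.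
Proof.
apply/stellarP; right; exists (window m.+1 :\ w); last first.
  by rewrite finset.setD1K // inE new_vertexE; lia.
rewrite fintype.properE; apply/andP; split.
  by apply/fintype.subsetP => u; rewrite !inE -val_eqE /= new_vertexE; lia.
apply/fintype.subsetPn; exists (inord (m - d.+1)); first by rewrite inE inordK; lia.
by rewrite !inE -val_eqE /= !inordK; lia.
Qed.

Lemma step_vertex_face u : u < m.+1 -> [set u] \in X'.
Proof.
move=> um; apply/stellarP; case: (ltnP u m) => um'.
  left; split; first exact: vertex_face X_inv _ um'.
  by apply/eqP => uw; have := card_window_step; rewrite -uw cards1; lia.
right; exists finset.set0.
  by rewrite properEcard finset.sub0set cards0 card_window_step.
by rewrite finset.setU0; congr [set _]; apply: val_inj; rewrite /= new_vertexE; lia.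
Qed.

Lemma step_gap_facet_face c : d.+2 <= c < m.+1 -> gap_facet c \in X'.
Proof.
move=> dc; apply/stellarP; case: (ltnP c m) => cm.
  left; split; first by apply: (gap_facet_face X_inv); lia.
  apply/eqP => /setP /(_ (inord (c - d.+1))).
  by rewrite !inE inordK; lia.
have -> : c = m by lia.
right; exists (gap_facet m :\ w); last by rewrite finset.setD1K // inE new_vertexE; lia.
rewrite fintype.properE; apply/andP; split.
  by apply/fintype.subsetP => u; rewrite !inE -val_eqE /= new_vertexE; lia.
apply/fintype.subsetPn; exists (inord m.-1); first by rewrite inE inordK; lia.
by rewrite !inE -val_eqE /= !inordK; lia.
Qed.

Lemma step_cycle_edge : d = 1 -> forall t u v, t \in X' -> u \in t -> v \in t ->
  v = u.+1 :> nat -> u = 0 :> nat \/ v = m :> nat.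
Proof.
move=> d1 t u v /stellarP [[tX tw]|[r rw ->]] ut vt vu.
  have [|vm] := cycle_edge X_inv d1 tX ut vt vu; first by left.
  suff /(window_facet tX) tw' : window m \subset t by rewrite tw' eqxx in tw.
  apply/fintype.subsetP => x; rewrite inE => xm.
  by have [/val_inj ->|/val_inj ->] : x = u :> nat \/ x = v :> nat by lia.
move: vt; rewrite in_setU1 => /orP [/eqP ->|vr]; first by right; rewrite new_vertexE.
have vw : v \in window m := fintype.subsetP (proper_sub rw) v vr.
have ur : u \in r.
  move: ut; rewrite in_setU1 => /orP [/eqP uw|//].
  by move: vw vu; rewrite inE uw new_vertexE; lia.
have uw : u \in window m := fintype.subsetP (proper_sub rw) u ur.
suff : window m \subset r by rewrite (negbTE (proper_subn rw)).
apply/fintype.subsetP => x; move: uw vw; rewrite !inE => uw vw xm.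
by have [/val_inj ->|/val_inj ->] : x = u :> nat \/ x = v :> nat by lia.
Qed.

Lemma stacked_inv_step : stacked_inv X' m.+1.
Proof.
split; [exact: step_card_face | exact: step_face_lt | exact: step_face_spread
  | exact: step_window_face | exact: step_vertex_face | exact: step_gap_facet_face
  | exact: step_cycle_edge].
Qed.

Lemma stellar_window_homeomorphic :
  homeomorphic (geom_realization X') (geom_realization X).
Proof.
exact: stellar_homeomorphic (window_face X_inv) window_facet window_card_gt1 new_vertex_fresh.
Qed.

Lemma stellar_window_simplicial : simplicial_complex X -> simplicial_complex X'.
Proof. exact: stellar_simplicial (window_face X_inv) window_facet. Qed.

End StackingStep.

Lemma stacked_inv_stacked j : d.+2 + j <= N.+1 -> stacked_inv (stacked j) (d.+2 + j).
Proof.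
elim: j => [|j IH] jN; first by rewrite addn0; exact: stacked_inv_base.
by rewrite /= addnS; apply: stacked_inv_step; [apply: IH | |]; lia.
Qed.

Lemma stacked_triangulation j : d.+2 + j <= N.+1 -> triangulation_of_sphere d (stacked j).
Proof.
elim: j => [|j IH] jN.
  split; first exact: simplex_boundary_simplicial.
  exact: simplex_boundary_homeomorphic base_vertex_inj.
have [|X_simpl X_homeo] := IH; first by lia.
have X_inv : stacked_inv (stacked j) (d.+2 + j) by apply: stacked_inv_stacked; lia.
split; first by apply: (stellar_window_simplicial X_inv) => //; lia.
by apply: homeomorphic_trans X_homeo; apply: (stellar_window_homeomorphic X_inv); lia.
Qed.

Definition stacked_sphere := stacked (N.+1 - d.+2).

Lemma stacked_sphere_inv : stacked_inv stacked_sphere N.+1.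
Proof.
have E : d.+2 + (N.+1 - d.+2) = N.+1 by lia.
by rewrite /stacked_sphere -{2}E; apply: stacked_inv_stacked; lia.
Qed.

Lemma stacked_sphere_triangulation : triangulation_of_sphere d stacked_sphere.
Proof. by apply: stacked_triangulation; lia. Qed.

Lemma vertices_stacked_sphere : #|vertices stacked_sphere| = N.+1.
Proof.
have -> : vertices stacked_sphere = [set: 'I_N.+1]%SET.
  by apply/setP => u; rewrite !inE; apply: (vertex_face stacked_sphere_inv).
by rewrite cardsT card_ord.
Qed.

Definition neighbourhood v : {set 'I_N.+1} := [set u : 'I_N.+1 | v - d.+1 <= u < v + d.+2].

Lemma card_neighbourhood v : #|neighbourhood v| <= (d + d).+3.
Proof. by rewrite card_ord_range; lia. Qed.

Lemma face_sub_neighbourhood t v :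
  t \in stacked_sphere -> v \in t -> t \subset neighbourhood v.
Proof.
move=> tX vt; apply/fintype.subsetP => u ut; rewrite inE.
have := face_spread stacked_sphere_inv tX ut vt.
by have := face_spread stacked_sphere_inv tX vt ut; lia.
Qed.

Lemma Delta_stacked_sphere : Delta stacked_sphere <= 2 ^ (d + d).+3.
Proof.
apply/bigmax_leqP => i _; apply/bigmax_leqP => j _.
apply/bigmax_leqP => s; rewrite inE => /andP[sX /eqP s_card].
have [v vs] : exists v, v \in s by apply/set0Pn; rewrite -card_gt0 s_card.
apply: leq_trans (_ : #|powerset (neighbourhood v)| <= _).
  apply: subset_leq_card; apply/fintype.subsetP => t.
  rewrite !inE => /andP[/andP[tX _] st].
  by apply: face_sub_neighbourhood tX _; exact: (fintype.subsetP st).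
by rewrite card_powerset leq_pexp2l // card_neighbourhood.
Qed.

Lemma Delta01_stacked_sphere : Delta_ij stacked_sphere 0 1 <= (d + d).+2.
Proof.
apply/bigmax_leqP => s; rewrite inE => /andP[_ /cards1P [v ->]].
apply: leq_trans (_ : #|[set [set v; u] | u in neighbourhood v :\ v]| <= _).
  apply: subset_leq_card; apply/fintype.subsetP => t.
  rewrite !inE => /andP[/andP[tX /cards2P [x [y [xy tE]]]]]; rewrite {t}tE in tX *.
  rewrite finset.sub1set => vt; have := face_sub_neighbourhood tX vt.
  move: vt; rewrite !inE => /orP [/eqP ->|/eqP ->] /fintype.subsetP t_nbh.
    by apply: imset_f; rewrite in_setD1 eq_sym xy t_nbh // !inE eqxx orbT.
  by rewrite finset.setUC; apply: imset_f; rewrite in_setD1 xy t_nbh // !inE eqxx.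
apply: leq_trans (leq_imset_card _ _) _.
have := card_neighbourhood v; rewrite (cardsD1 v) inE.
by have -> : v - d.+1 <= v < v + d.+2 by lia.
Qed.

Lemma gap_facet_skel c : d.+2 <= c <= N -> gap_facet c \in skel stacked_sphere d.
Proof.
move=> dc; rewrite inE (gap_facet_face stacked_sphere_inv) /= ?card_gap_facet //; lia.
Qed.

Lemma gap_facets_separated c c' : d.+2 <= c -> c' <= N ->
  (d = 1 /\ c' = c + 3) \/ c + (d + d).+3 <= c' ->
  [disjoint gap_facet c & gap_facet c'] /\
  nonadjacent stacked_sphere (gap_facet c) (gap_facet c') /\
  nonadjacent stacked_sphere (gap_facet c') (gap_facet c).
Proof.
move=> dc c'N far.
have no_edge : nonadjacent stacked_sphere (gap_facet c) (gap_facet c').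
  move=> x y; rewrite !inE => xc yc'; apply/negP => /andP[xyX _].
  have xxy : x \in [set x; y] by rewrite !inE eqxx.
  have yxy : y \in [set x; y] by rewrite !inE eqxx orbT.
  have := face_spread stacked_sphere_inv xyX yxy xxy.
  case: far => [[d1 c'E]|]; last by lia.
  have := cycle_edge stacked_sphere_inv d1 xyX xxy yxy; lia.
split; last by split; last exact: nonadjacent_sym.
rewrite -finset.setI_eq0; apply/eqP/setP => u; rewrite !inE.
by apply/negbTE; case: far; lia.
Qed.

End StackedSphere.

Lemma stacked_sphere_sparse_facets d k : 0 < d -> 0 < k ->
  exists (V : finType) (X : {set {set V}}),
    [/\ triangulation_of_sphere d X, Delta_ij X 0 1 <= (d + d).+2,
        Delta X <= 2 ^ (d + d).+3,
        #|vertices X| = (d ^ 2 + d + 1) * k + (d + 2) ^ 2 &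
        exists t : 'I_k -> {set V},
          (forall i, t i \in skel X d) /\
          (forall i j, i != j -> [disjoint t i & t j] /\ nonadjacent X (t i) (t j))].
Proof.
move=> d_gt0 k_gt0; set N := ((d ^ 2 + d + 1) * k + (d + 2) ^ 2).-1.
have NE : N.+1 = (d ^ 2 + d + 1) * k + (d + 2) ^ 2 by rewrite /N prednK //; nia.
have dN : d.+2 <= N.+1 by rewrite NE; nia.
exists 'I_N.+1, (stacked_sphere dN).
(* The vertex budget allows the step d^2+d+1 >= 2d+3 between chosen facets,
   except for d = 1, where the step 3 relies on [cycle_edge]. *)
pose p := if d == 1 then 3 else (d + d).+3.
pose c (i : 'I_k) := d.+2 + p * i.
have c_range i : d.+2 <= c i <= N.
  by have := ltn_ord i; rewrite /c /p /N; case: eqP => [->|/eqP dn1] ik; nia.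
have c_far (i j : 'I_k) : i < j -> (d = 1 /\ c j = c i + 3) \/ c i + (d + d).+3 <= c j.
  rewrite /c /p; case: eqP => [d1 ij|/eqP dn1 ij]; last by right; nia.
  by case: (eqVneq (j : nat) i.+1) => [->|ji]; [left | right]; lia.
split.
- exact: stacked_sphere_triangulation.
- exact: Delta01_stacked_sphere.
- exact: Delta_stacked_sphere.
- by rewrite vertices_stacked_sphere // NE.
pose t i := gap_facet d N (c i).
have sep (i j : 'I_k) : i < j -> [/\ [disjoint t i & t j],
    nonadjacent (stacked_sphere dN) (t i) (t j) &
    nonadjacent (stacked_sphere dN) (t j) (t i)].
  move=> ij; have /andP[ci _] := c_range i; have /andP[_ cj] := c_range j.
  by have [? []] := gap_facets_separated d_gt0 dN ci cj (c_far i j ij).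
exists t; split => [i|i j]; first exact: gap_facet_skel.
case: (ltngtP i j) => [/sep [] //|/sep []|/val_inj ->]; last by rewrite eqxx.
by rewrite disjoint_sym.
Qed.

Theorem lemma9 :
  (forall d k : nat, 0 < d -> 0 < k ->
     exists (V : finType) (X : {set {set V}}),
       [/\ triangulation_of_sphere d X,
           Delta_ij X 0 1 <= d.+1 * (d ^ 2 + d + 2),
           #|vertices X| = (d ^ 2 + d + 1) * k + (d + 2) ^ 2 &
           exists t : 'I_k -> {set V},
             (forall i, t i \in skel X d) /\
             (forall i j, i != j -> [disjoint t i & t j] /\ nonadjacent X (t i) (t j))])
  /\
  (forall d : nat, 0 < d ->
     exists L : nat, forall k : nat, 0 < k ->
       exists (V : finType) (X : {set {set V}}),
         [/\ triangulation_of_sphere d X,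
             Delta X <= L,
             #|vertices X| <= L * k &
             exists t : 'I_k -> {set V},
               (forall i, t i \in skel X d) /\
               (forall i j, i != j -> [disjoint t i & t j] /\ nonadjacent X (t i) (t j))]).
Proof.
split => [d k d_gt0 k_gt0|d d_gt0].
  have [V [X [sphere_X D01 _ card_V facets]]] := stacked_sphere_sparse_facets d_gt0 k_gt0.
  by exists V, X; split => //; apply: leq_trans D01 _; nia.
exists ((d ^ 2 + d + 1) + (d + 2) ^ 2 + 2 ^ (d + d).+3) => k k_gt0.
have [V [X [sphere_X _ D card_V facets]]] := stacked_sphere_sparse_facets d_gt0 k_gt0.
exists V, X; split => //; first by apply: leq_trans D _; rewrite leq_addl.
by rewrite card_V; nia.
Qed.
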